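(* Let $m\ge 2$ be an integer such that $p_1(x)=x^{m+1}+x+1$ is irreducible over $\mathrm{GF}(2)$, and let $F=\mathrm{GF}(2^{m+1})=\mathrm{GF}(2)[x]/(p_1(x))$, whose elements are identified with the polynomials over $\mathrm{GF}(2)$ of degree at most $m$. Let $D_0$ be the multiplication table of $F$ (rows and columns indexed by the elements of $F$, entry in row $a$ and column $b$ equal to $ab$ computed in $F$). Let $D_1$ be the $2^{m+1}\times 4$ submatrix of $D_0$ consisting of the columns indexed by $0,1,x,x+1$, and let $D_2$ be the submatrix of $D_1$ consisting of the $2^m$ rows indexed by the elements of $r_{m-2}\cup\big(x^m+x^{m-1}+r_{m-2}\big)$. Then: (i) $D_1$ is a difference matrix $D(2^{m+1},2^2,2^{m+1})$ over the additive group of $F$; (ii) $\phi(D_2)$ is a difference matrix $D(2^m,2^2,2^m)$ over the additive group of $\mathrm{GF}(2^m)$.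
   Context: $r_{m-2}$ denotes the set of all polynomials over $\mathrm{GF}(2)$ of degree at most $m-2$, and $q+S=\{q+s:s\in S\}$. A difference matrix $D(b,c,g)$ over a finite abelian group $\mathcal{A}$ of order $g$ is a $b\times c$ array with entries in $\mathcal{A}$ such that, for any two distinct columns, their entrywise difference vector contains every element of $\mathcal{A}$ equally often. Elements of $\mathrm{GF}(2^m)$ are identified (as an additive group) with polynomials over $\mathrm{GF}(2)$ of degree at most $m-1$. The truncation projection $\phi$ maps $a_0+a_1x+\cdots+a_mx^m\in F$ to $a_0+a_1x+\cdots+a_{m-1}x^{m-1}$; for an array $D$, $\phi(D)$ is obtained by applying $\phi$ entrywise. *)

From HB Require Import structures.
From mathcomp Require Import all_boot all_order all_algebra.
Set Implicit Arguments. Unset Strict Implicit. Unset Printing Implicit Defensive.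
Import GRing.Theory.
Local Open Scope ring_scope.

(* A difference matrix D(b,c,g) over a finite abelian group G (of order g):
   a b x c array with entries in G, rows indexed by the elements of a finite
   set S of row labels (#|S| = b), columns indexed by 'I_c, such that for any
   two distinct columns the entrywise difference vector contains every element
   of G equally often. *)
Definition diff_matrix (G : finZmodType) (I : finType) (S : {set I}) (c : nat)
    (D : I -> 'I_c -> G) (b g : nat) : Prop :=
  [/\ #|S| = b, #|G| = g &
      forall j1 j2 : 'I_c, j1 != j2 -> forall u v : G,
        #|[set i in S | D i j1 - D i j2 == u]| =
        #|[set i in S | D i j1 - D i j2 == v]| ].

Definition p1 (m : nat) : {poly 'F_2} := 'X^(m.+1) + 'X + 1.

(* Elements of GF(2^(m+1)) = GF(2)[x]/(p_1): polynomials of degree <= m. *)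
Notation Fm m := {poly_(m.+1) 'F_2}.

Definition Fmul (m : nat) (a b : Fm m) : Fm m :=
  npolyp m.+1 ((val a * val b) %% p1 m).

Definition D0 (m : nat) (a b : Fm m) : Fm m := Fmul a b.

Definition col_label (m : nat) (j : 'I_4) : Fm m :=
  npolyp m.+1 (nth 0 [:: 0; 1; 'X; 'X + 1] j).

Definition D1 (m : nat) (a : Fm m) (j : 'I_4) : Fm m := D0 a (col_label m j).

(* Row labels of D_2: r_{m-2} U (x^m + x^(m-1) + r_{m-2}),
   r_{m-2} = polynomials of degree <= m-2, i.e. size <= m-1. *)
Definition D2_rows (m : nat) : {set Fm m} :=
  [set a : Fm m | leq (size (val a)) m.-1 ||
                  leq (size (val a - ('X^m + 'X^(m.-1)))%R) m.-1].

(* Truncation phi : a_0 + ... + a_m x^m |-> a_0 + ... + a_(m-1) x^(m-1),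
   landing in GF(2^m) identified additively with polynomials of degree <= m-1. *)
Definition phi (m : nat) (a : Fm m) : {poly_m 'F_2} := npolyp m (val a).

(* phi(D_2): D_2 is D_1 restricted to the rows D2_rows; phi applied entrywise. *)
Definition phiD2 (m : nat) (a : Fm m) (j : 'I_4) : {poly_m 'F_2} := phi (D1 a j).

From mathcomp Require Import all_boot all_order all_algebra ring.
Set Implicit Arguments. Unset Strict Implicit. Unset Printing Implicit Defensive.
Import GRing.Theory.
Local Open Scope ring_scope.

(* Subtracting two of the columns 0, 1, x, x+1 gives multiplication by some
   e in {1, x, x+1}, and e is a unit modulo p_1 since p_1(0) = p_1(1) = 1; so
   every column difference of D_1 is a bijection of F, which is (i).  The rows
   of D_2 form the subgroup H = {a | a_m = a_(m-1)} of F, and phi is additive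
   with kernel {0, x^m}.  Hence a column difference of phi(D_2) is injective on
   H as soon as the unique solution a of a e = x^m, namely x^m, x^(m-1) or
   x^m + 1, lies outside H, which holds for m >= 2. *)

Lemma card_preim_in_inj (I T : finType) (S : {set I}) (f : I -> T) (u : T) :
  {in S &, injective f} -> #|S| = #|T| -> #|[set i in S | f i == u]| = 1%N.
Proof.
move=> f_inj cardS.
have /imsetP[i iS ->] : u \in f @: S.
  suff -> : f @: S = [set: T] by rewrite inE.
  by apply/eqP; rewrite eqEcard subsetT cardsT card_in_imset // cardS /=.
rewrite -(cards1 i); apply: eq_card => k; rewrite !inE.
apply/andP/eqP => [[kS /eqP/f_inj] | ->]; first exact.
by rewrite iS.
Qed.

Lemma diff_matrix_in_inj (G : finZmodType) (I : finType) (S : {set I}) (c : nat)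
    (D : I -> 'I_c -> G) :
  #|S| = #|G| ->
  (forall j1 j2 : 'I_c, j1 != j2 -> {in S &, injective (fun i => D i j1 - D i j2)}) ->
  diff_matrix S D #|G| #|G|.
Proof.
move=> cardS D_inj; split=> // j1 j2 j12 u v.
by rewrite !(card_preim_in_inj _ (D_inj _ _ j12)).
Qed.

Lemma F2_cases (x : 'F_2) : x = 0 \/ x = 1.
Proof. by case: x => [[|[|n]]] // ?; [left | right]; apply/val_inj. Qed.

Lemma pchar_polyF2 : 2%N \in [pchar {poly 'F_2}].
Proof. by rewrite pchar_poly pchar_Fp. Qed.

Lemma modp_mul_inj (R : fieldType) (p e a b : {poly R}) : coprimep p e ->
  (size a < size p)%N -> (size b < size p)%N -> (a * e) %% p = (b * e) %% p -> a = b.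
Proof.
move=> cop_pe sa sb eq_ab; apply/eqP; rewrite -subr_eq0; apply/eqP.
have sab : (size (a - b)%R < size p)%N.
  by rewrite (leq_ltn_trans (size_polyD a (- b))) // gtn_max size_polyN sa.
rewrite -(modp_small sab); apply/modp_eq0P.
rewrite -(Gauss_dvdpl _ cop_pe); apply/modp_eq0P.
by rewrite mulrBl modpD modpN eq_ab subrr.
Qed.

Lemma polyF2_eq0_or_Xn (n : nat) (d : {poly 'F_2}) : (size d <= n.+1)%N ->
  (forall i, (i < n)%N -> d`_i = 0) -> d = 0 \/ d = 'X^n.
Proof.
move=> sd low.
have d_eq : d = d`_n *: 'X^n.
  apply/polyP => i; rewrite coefZ coefXn.
  case: (ltngtP i n) => [/low-> | ni | ->]; rewrite ?mulr0 ?mulr1 //.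
  by rewrite nth_default // (leq_trans sd ni).
rewrite d_eq; case: (F2_cases d`_n) => ->; [left | right].
  exact: scale0r.
exact: scale1r.
Qed.

Lemma size_poly_le_top2 (R : nzRingType) (n : nat) (q : {poly R}) :
  (size q <= n.+2)%N -> (size q <= n)%N = (q`_n.+1 == 0) && (q`_n == 0).
Proof.
have size_leS k : (size q <= k.+1)%N -> q`_k = 0 -> (size q <= k)%N.
  move=> sq qk; apply/leq_sizeP => j; rewrite leq_eqVlt => /orP[/eqP<- // | kj].
  exact/nth_default/(leq_trans sq).
move=> sq; apply/idP/andP => [sqn | [/eqP qn1 /eqP qn]].
  by rewrite !nth_default // (leq_trans sqn).
exact/size_leS/qn/size_leS.
Qed.

Section MulmodP1.

Variable m : nat.
Hypothesis m_ge2 : (2 <= m)%N.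

Let m_gt0 : (0 < m)%N. Proof. exact: ltnW. Qed.
Let pred_m_lt : (m.-1 < m)%N. Proof. by rewrite ltn_predL. Qed.

Lemma size_p1 : size (p1 m) = m.+2.
Proof.
by rewrite /p1 -addrA size_polyDl size_polyXn // -[1]/(1%:P) size_XaddC ltnS.
Qed.

Lemma size_modp1 (q : {poly 'F_2}) : (size (q %% p1 m)%R <= m.+1)%N.
Proof. by rewrite -ltnS -size_p1 ltn_modp -size_poly_eq0 size_p1. Qed.

Lemma size_val_lt_p1 (a : Fm m) : (size (val a) < size (p1 m))%N.
Proof. by rewrite size_p1 ltnS size_npoly. Qed.

Lemma coprimep_p1 (e : {poly 'F_2}) : e \in [:: 1; 'X; 'X + 1] -> coprimep (p1 m) e.
Proof.
have rootN0 x : ~~ root (p1 m) x.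
  by rewrite /root /p1 !hornerE; case: (F2_cases x) => ->; rewrite ?expr0n ?expr1n.
rewrite !inE => /or3P[] /eqP->; first exact: coprimep1.
  by rewrite coprimepX.
by rewrite -(GRing.subr_pchar2 pchar_polyF2) coprimep_XsubC.
Qed.

Definition col_poly (j : 'I_4) : {poly 'F_2} := nth 0 [:: 0; 1; 'X; 'X + 1] j.

Lemma col_poly_diff (j1 j2 : 'I_4) : j1 != j2 ->
  col_poly j1 - col_poly j2 \in [:: 1; 'X; 'X + 1].
Proof.
have ch2 := pchar_polyF2; rewrite /col_poly (GRing.subr_pchar2 ch2).
case: j1 j2 => [[|[|[|[|?]]]] ?] [[|[|[|[|?]]]] ?] //= _;
  rewrite ?add0r ?addr0 ?[1 + _]addrC ?(addrK_pchar2 ch2) ?(addKr_pchar2 ch2);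
  rewrite ?(addrAC _ 1 'X) ?(addrr_pchar2 ch2) ?add0r !inE ?eqxx ?orTb ?orbT //.
Qed.

Lemma D1_val (a : Fm m) (j : 'I_4) : val (D1 a j) = (val a * col_poly j) %% p1 m.
Proof.
rewrite /D1 /D0 /Fmul /col_label /= npolypK ?size_modp1 // npolypK //.
case: j => [[|[|[|[|j]]]] hj] //=.
- by rewrite size_poly0.
- by rewrite size_poly1.
- by rewrite size_polyX.
- by rewrite -[1]/(1%:P) size_XaddC.
Qed.

Lemma D1_diff_val (a : Fm m) (j1 j2 : 'I_4) :
  val (D1 a j1 - D1 a j2) = (val a * (col_poly j1 - col_poly j2)) %% p1 m.
Proof. by rewrite [val _]/= !D1_val mulrBr modpD modpN. Qed.

Lemma D1_diff_inj (j1 j2 : 'I_4) : j1 != j2 ->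
  injective (fun a : Fm m => D1 a j1 - D1 a j2).
Proof.
move=> j12 a b /(congr1 val); rewrite !D1_diff_val => eq_ab.
apply/val_inj; apply: modp_mul_inj eq_ab; rewrite ?size_val_lt_p1 //.
exact/coprimep_p1/col_poly_diff.
Qed.

Lemma mem_D2_rows (a : Fm m) : (a \in D2_rows m) = ((val a)`_m == (val a)`_m.-1).
Proof.
have size_le_pred (q : {poly 'F_2}) : (size q <= m.+1)%N ->
    (size q <= m.-1)%N = (q`_m == 0) && (q`_m.-1 == 0).
  by have := @size_poly_le_top2 _ m.-1 q; rewrite prednK.
have sX : (size (('X^m + 'X^(m.-1))%R : {poly 'F_2}) <= m.+1)%N.
  by rewrite (leq_trans (size_polyD _ _)) // !size_polyXn geq_max leqnn ltnS leq_pred.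
rewrite inE !size_le_pred ?size_npoly //; last first.
  by rewrite (leq_trans (size_polyD _ _)) // size_polyN geq_max size_npoly.
rewrite !coefB !coefD !coefXn !eqxx (gtn_eqF pred_m_lt) (ltn_eqF pred_m_lt) addr0 add0r.
by case: (F2_cases (val a)`_m) => ->; case: (F2_cases (val a)`_m.-1) => ->.
Qed.

Lemma mulmodp1_eq_Xm_coef_neq (e c : {poly 'F_2}) : e \in [:: 1; 'X; 'X + 1] ->
  (size c <= m.+1)%N -> (c * e) %% p1 m = 'X^m -> c`_m != c`_m.-1.
Proof.
move=> e_col sc ceXm.
have sXm : (size ('X^m : {poly 'F_2}) < size (p1 m))%N by rewrite size_polyXn size_p1.
suff [w [sw wXm w_coef]] : exists w : {poly 'F_2},
    [/\ (size w <= m.+1)%N, (w * e) %% p1 m = 'X^m & w`_m != w`_m.-1].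
  suff <- : w = c by [].
  by apply: (modp_mul_inj (coprimep_p1 e_col)); rewrite ?size_p1 ?ltnS // wXm ceXm.
have mm1 := gtn_eqF pred_m_lt; have m1m := ltn_eqF pred_m_lt.
have coefXnn i : ('X^i : {poly 'F_2})`_i = 1 by rewrite coefXn eqxx.
move: e_col; rewrite !inE => /or3P[] /eqP->.
- exists 'X^m; rewrite size_polyXn mulr1 modp_small //.
  by rewrite coefXnn coefXn m1m oner_neq0.
- exists 'X^(m.-1); rewrite size_polyXn -exprSr prednK // modp_small //.
  by rewrite coefXnn coefXn mm1 eq_sym oner_eq0.
exists ('X^m + 1); split.
- by rewrite (leq_trans (size_polyD _ _)) // size_polyXn size_poly1 geq_max leqnn.
- have -> : ('X^m + 1) * ('X + 1) = p1 m + 'X^m by rewrite /p1 exprSr; ring.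
  by rewrite modpD modpp add0r modp_small.
have pred_m_gt0 : (0 < m.-1)%N by rewrite ltn_predRL.
by rewrite !coefD coefXnn !coef1 coefXn m1m !gtn_eqF // add0r addr0 oner_neq0.
Qed.

Definition trunc_mulmod (e : {poly 'F_2}) (a : Fm m) : {poly_m 'F_2} :=
  npolyp m ((val a * e) %% p1 m).

Lemma trunc_mulmod_in_inj (e : {poly 'F_2}) : e \in [:: 1; 'X; 'X + 1] ->
  {in D2_rows m &, injective (trunc_mulmod e)}.
Proof.
move=> e_col a b aH bH /npolyP eq_ab.
have low i : (i < m)%N -> ((val (a - b) * e) %% p1 m)`_i = 0.
  move=> im; have := eq_ab i; rewrite !coef_npolyp im => eq_abi.
  by rewrite [val _]/= mulrBl modpD modpN coefD coefN eq_abi subrr.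
have [ab0 | abXm] := polyF2_eq0_or_Xn (size_modp1 _) low.
  apply/eqP; rewrite -subr_eq0; apply/eqP/val_inj.
  apply: (modp_mul_inj (coprimep_p1 e_col)) (size_val_lt_p1 _) (size_val_lt_p1 0) _.
  by rewrite ab0 mul0r mod0p.
case/negP: (mulmodp1_eq_Xm_coef_neq e_col (size_npoly _) abXm).
by move: aH bH; rewrite !mem_D2_rows [val _]/= !coefB => /eqP-> /eqP->.
Qed.

Lemma phi_trunc_mulmod1 (a : Fm m) : phi a = trunc_mulmod 1 a.
Proof. by rewrite /trunc_mulmod mulr1 modp_small ?size_val_lt_p1. Qed.

Lemma phiD2_diff (a : Fm m) (j1 j2 : 'I_4) :
  phiD2 a j1 - phiD2 a j2 = trunc_mulmod (col_poly j1 - col_poly j2) a.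
Proof.
apply/npolyP => i; rewrite /trunc_mulmod -D1_diff_val coef_npolyp.
rewrite [LHS](coefB (val (phiD2 a j1))) /phiD2 /phi !(coef_npolyp (val (D1 a _))).
by case: ifP; rewrite ?subrr // -coefB.
Qed.

Lemma phi_D2_rows : @phi m @: D2_rows m = [set: {poly_m 'F_2}].
Proof.
apply/setP => u; rewrite inE; apply/imsetP.
have su := size_npoly u.
pose w := val u + (val u)`_m.-1 *: 'X^m.
have sw : (size w <= m.+1)%N.
  apply/leq_sizeP => j mj; rewrite coefD coefZ coefXn (gtn_eqF mj) mulr0 addr0.
  exact/nth_default/(leq_trans su)/ltnW.
exists (npolyp m.+1 w).
  rewrite mem_D2_rows /= npolypK // !coefD !coefZ !coefXn eqxx (ltn_eqF pred_m_lt).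
  by rewrite (nth_default _ su) mulr0 mulr1 add0r addr0.
apply/npolyP => i; rewrite coef_npolyp /= npolypK // coefD coefZ coefXn.
case: ltnP => [/ltn_eqF-> | mi]; first by rewrite mulr0 addr0.
by rewrite nth_default // (leq_trans su).
Qed.

Lemma card_D2_rows : #|D2_rows m| = (2 ^ m)%N.
Proof.
have phi_inj : {in D2_rows m &, injective (@phi m)}.
  move=> a b aH bH; rewrite !phi_trunc_mulmod1.
  exact: trunc_mulmod_in_inj (mem_head _ _) a b aH bH.
by rewrite -(card_in_imset phi_inj) phi_D2_rows cardsT card_npoly card_Fp.
Qed.

Lemma diff_matrix_D1 : diff_matrix [set: Fm m] (@D1 m) (2 ^ m.+1) (2 ^ m.+1).
Proof.
have cardF : #|Fm m| = (2 ^ m.+1)%N by rewrite card_npoly card_Fp.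
rewrite -cardF; apply: diff_matrix_in_inj; first by rewrite cardsT.
by move=> j1 j2 j12 a b _ _; apply: D1_diff_inj.
Qed.

Lemma diff_matrix_phiD2 : diff_matrix (D2_rows m) (@phiD2 m) (2 ^ m) (2 ^ m).
Proof.
have cardFm : #|{poly_m 'F_2}| = (2 ^ m)%N by rewrite card_npoly card_Fp.
rewrite -cardFm; apply: diff_matrix_in_inj; first by rewrite card_D2_rows.
move=> j1 j2 j12 a b aH bH; rewrite !phiD2_diff.
exact: trunc_mulmod_in_inj (col_poly_diff j12) a b aH bH.
Qed.

End MulmodP1.

(* [hirr] is unused: only the coprimality of p_1 with x and x + 1 matters. *)
Theorem theorem1 (m : nat) (hm : (2 <= m)%N) (hirr : irreducible_poly (p1 m)) :
  diff_matrix [set: Fm m] (@D1 m) (2 ^ m.+1) (2 ^ m.+1) /\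
  diff_matrix (D2_rows m) (@phiD2 m) (2 ^ m) (2 ^ m).
Proof. by split; [apply: diff_matrix_D1 | apply: diff_matrix_phiD2]. Qed.
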